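(* Let $q$ be a prime power, $n, m \in \mathbb{N}$. For every integer $0 \le d < mq^2$, $$\mathrm{rank}_{\mathbb{F}_q} \mathrm{EVAL}^m(\mathcal{V}_{\mathrm{full}}, W_{d,n}) = |W_{d,n}| = \binom{d+n}{d}.$$
   Context: Work over the field $\mathbb{F} = \mathbb{F}_q(t_1,t_2)$ of rational functions. For $f \in \mathbb{F}[x_1,\dots,x_n]$ and $\mathbf{i} \in \mathbb{Z}_{\ge 0}^n$, the $\mathbf{i}$-th Hasse derivative $f^{(\mathbf{i})}$ is defined by the expansion $f(x+z) = \sum_{\mathbf{j}} f^{(\mathbf{j})}(x) z^{\mathbf{j}}$; the weight of $\mathbf{j}$ is $\mathrm{wt}(\mathbf{j}) = \sum_i j_i$. $W_{d,n}$ is the set of monomials in $x_1,\dots,x_n$ of degree at most $d$. For $S \subset \mathbb{F}^n$ and a set of monomials $W$, $\mathrm{EVAL}^m(S,W)$ is the matrix with columns indexed by $f \in W$, rows indexed by pairs $(x,\mathbf{j}) \in S \times \mathbb{Z}_{\ge 0}^n$ with $\mathrm{wt}(\mathbf{j}) < m$, and $((x,\mathbf{j}),f)$ entry $f^{(\mathbf{j})}(x)$. For a matrix over an extension field of $\mathbb{F}_q$, $\mathrm{rank}_{\mathbb{F}_q}$ is the largest size of a set of columns no nonzero $\mathbb{F}_q$-linear combination of which is zero. $\mathcal{V} = \{u t_1 + v t_2 : u, v \in \mathbb{F}_q^n\}$ and $\mathcal{V}_{\mathrm{full}} = \{u t_1 + v t_2 \in \mathcal{V} : u, v \text{ linearly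 independent over } \mathbb{F}_q\}$. *)

From HB Require Import structures.
From mathcomp Require Import all_boot all_order all_algebra all_field.
From mathcomp Require Import fraction.
From mathcomp.multinomials Require Import mpoly.
From Stdlib Require Import ClassicalEpsilon.

Set Implicit Arguments.
Unset Strict Implicit.
Unset Printing Implicit Defensive.

Import GRing.Theory.
Local Open Scope ring_scope.

(* Hasse derivative, defined by the expansion f(x+z) = sum_j f^(j)(x) z^j :
   f(x+z) is computed in {mpoly {mpoly R[n]}[n]} (outer variables z,
   inner variables x), and f^(j) is the coefficient of z^j. *)
Definition hasse (R : comRingType) (n : nat) (j : 'X_{1..n}) (f : {mpoly R[n]})
  : {mpoly R[n]} :=
  (@mmap n R {mpoly {mpoly R[n]}[n]}
     (fun c : R => (c%:MP)%:MP)
     (fun i : 'I_n => ('X_i : {mpoly R[n]})%:MP + 'X_i) f)@_j.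

(* The field F = F_q(t1, t2), with F_q = K a finite field. *)
Definition FF (K : finFieldType) := {fraction {poly {poly K}}}.

Definition toFF (K : finFieldType) (p : {poly {poly K}}) : FF K :=
  @FracField.tofrac {poly {poly K}} p.

Definition inF (K : finFieldType) (c : K) : FF K := toFF ((c%:P)%:P).
Definition t1 (K : finFieldType) : FF K := toFF ((('X : {poly K})%:P)).
Definition t2 (K : finFieldType) : FF K := toFF ('X : {poly {poly K}}).

Definition pt (K : finFieldType) (n : nat) (u v : 'rV[K]_n) : 'I_n -> FF K :=
  fun i => inF (u 0 i) * t1 K + inF (v 0 i) * t2 K.

Definition lin_indep2 (K : finFieldType) (n : nat) (u v : 'rV[K]_n) : Prop :=
  \rank (col_mx u v) = 2%N.

(* Entry ((x, j), f) of EVAL^m(V_full, W_{d,n}) for x = u t1 + v t2 and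
   f = X^w : the value f^(j)(x). *)
Definition EVAL_entry (K : finFieldType) (n : nat) (u v : 'rV[K]_n)
  (j : 'X_{1..n}) (w : 'X_{1..n}) : FF K :=
  (hasse j ('X_[w] : {mpoly FF K[n]})).@[pt u v].

(* A set S of columns of EVAL^m(V_full, W_{d,n}) (columns indexed by the
   monomials of degree <= d, i.e. 'X_{1..n < d.+1}; rows by (x, j) with
   x in V_full and wt(j) < m, i.e. j : 'X_{1..n < m}) is F_q-linearly
   independent. *)
Definition Fq_indep_cols (K : finFieldType) (n m d : nat)
  (S : {set 'X_{1..n < d.+1}}) : Prop :=
  forall c : 'X_{1..n < d.+1} -> K,
    (forall (u v : 'rV[K]_n) (j : 'X_{1..n < m}), lin_indep2 u v ->
       \sum_(w in S) inF (c w) * EVAL_entry u v j w = 0) ->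
    forall w, w \in S -> c w = 0.

Definition Fq_indep_colsb (K : finFieldType) (n m d : nat)
  (S : {set 'X_{1..n < d.+1}}) : bool :=
  if excluded_middle_informative (@Fq_indep_cols K n m d S) then true else false.

Definition rank_Fq_EVAL (K : finFieldType) (n m d : nat) : nat :=
  \max_(S : {set 'X_{1..n < d.+1}} | @Fq_indep_colsb K n m d S) #|S|.

From HB Require Import structures.
From mathcomp Require Import all_boot all_order all_algebra all_field.
From mathcomp Require Import fraction.
From mathcomp.multinomials Require Import mpoly.
From mathcomp Require Import ring zify.

(* The Hasse derivatives of f at x are the coefficients of f(x + Z). An F_q-linear
   relation among the columns is a polynomial f of degree <= d with coefficients in F_q
   whose Hasse derivatives of weight < m vanish on V_full. Any point a t1 + b t2 of V is
   the image of a point u t1 + v t2 of V_full under an F_q-algebra endomorphism of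
   F_q[t1, t2] mapping t1, t2 to linear forms (since n >= 2, the span of a and b lies in
   a plane spanned by independent u, v), and these substitutions fix f. So f vanishes to
   order m on all of V = T^n with T = {a t1 + b t2 : a, b in F_q}, |T| = q^2, and the
   multiplicity Schwartz-Zippel lemma (induction on n through the leading coefficient in
   the last variable) forces f = 0 since deg f < m q^2. *)

Set Implicit Arguments.
Unset Strict Implicit.
Unset Printing Implicit Defensive.

Import GRing.Theory.
Local Open Scope ring_scope.

Lemma dvdp_exp_XsubC_shift (E : fieldType) (h : {poly E}) (tau : E) (k : nat) :
  (forall i, (i < k)%N -> (h \Po ('X + tau%:P))`_i = 0) -> ('X - tau%:P) ^+ k %| h.
Proof.
move=> hk; set g := h \Po ('X + tau%:P).
have g_low : take_poly k g = 0.
  by apply/polyP => i; rewrite coef_take_poly coef0; case: ifP => // /hk.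
have -> : h = g \Po ('X - tau%:P) by rewrite comp_polyXaddC_K.
rewrite -[g](poly_take_drop k) g_low add0r comp_polyM comp_Xn_poly.
exact: dvdp_mull.
Qed.

Lemma poly_mroots_eq0 (E : fieldType) (T : seq E) (k : nat) (h : {poly E}) :
  uniq T ->
  (forall tau, tau \in T -> forall i, (i < k)%N -> (h \Po ('X + tau%:P))`_i = 0) ->
  (size h <= k * size T)%N -> h = 0.
Proof.
move=> uT hT size_h; pose q := \prod_(t <- T) ('X - t%:P).
have dvd_h : q ^+ k %| h.
  rewrite /q -prodrXl; elim: T uT hT {q size_h} => [|t s IH] /=.
    by rewrite big_nil dvd1p.
  case/andP => t_s us hT; rewrite big_cons Gauss_dvdp.
    rewrite dvdp_exp_XsubC_shift ?IH // => [tau tau_s|]; apply: hT.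
      by rewrite inE tau_s orbT.
    by rewrite inE eqxx.
  apply: coprimep_expl; rewrite coprimep_sym coprimep_XsubC rootE horner_prod.
  rewrite prodf_seq_neq0; apply/allP => x x_s /=.
  rewrite horner_exp hornerXsubC expf_neq0 // subr_eq0.
  by apply: contra t_s => /eqP ->.
apply/eqP; apply: contraTT size_h => h_neq0; rewrite -ltnNge.
have q_neq0 : q != 0 by rewrite -size_poly_eq0 size_prod_XsubC.
have := size_exp q k; rewrite size_prod_XsubC /= mulnC => size_qk.
apply: leq_trans (dvdp_leq h_neq0 dvd_h).
by rewrite -size_qk prednK // lt0n size_poly_eq0 expf_neq0.
Qed.

Local Notation widen := (widen_ord (leqnSn _)).

Section MnmJoin.
Variable n : nat.

Definition mjoin (j : 'X_{1..n}) (i : nat) : 'X_{1..n.+1} := [multinom of rcons j i].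
Definition mfront (m : 'X_{1..n.+1}) : 'X_{1..n} := [multinom m (widen k) | k < n].

Lemma mjoin_max j i : mjoin j i ord_max = i.
Proof. by rewrite multinomE (tnth_nth 0%N) nth_rcons /= size_tuple ltnn eqxx. Qed.

Lemma mjoin_widen j i (k : 'I_n) : mjoin j i (widen k) = j k.
Proof.
by case: j => j; rewrite !(mnm_nth 0%N) nth_rcons size_tuple /=; case: k => k /= ->.
Qed.

Lemma mdeg_mjoin j i : mdeg (mjoin j i) = (mdeg j + i)%N.
Proof. by rewrite /mdeg /= big_rcons /= addnC. Qed.

Lemma mfrontK m : mjoin (mfront m) (m ord_max) = m.
Proof.
apply/mnmP => k; case: (unliftP ord_max k) => [k' ->|->]; last by rewrite mjoin_max.
have -> : lift ord_max k' = widen k' by apply/val_inj; exact: lift_max.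
by rewrite mjoin_widen mnmE.
Qed.

Lemma mjoinK j i : mfront (mjoin j i) = j.
Proof. by apply/mnmP => k; rewrite mnmE mjoin_widen. Qed.

Lemma mjoin_inj j i j' i' : mjoin j i = mjoin j' i' -> j = j' /\ i = i'.
Proof.
move=> e; split; first by rewrite -(mjoinK j i) e mjoinK.
by rewrite -(mjoin_max j i) e mjoin_max.
Qed.

Lemma mnm1_widen (k : 'I_n) : U_(widen k)%MM = mjoin U_(k)%MM 0.
Proof.
apply/mnmP => l; case: (unliftP ord_max l) => [k' ->|->].
  have -> : lift ord_max k' = widen k' by apply/val_inj; exact: lift_max.
  by rewrite mjoin_widen !mnm1E -val_eqE -[k == k']val_eqE.
by rewrite mjoin_max mnm1E; apply/eqP; rewrite eqb0 -val_eqE /= neq_ltn ltn_ord.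
Qed.

Lemma mnm1_max : U_(@ord_max n)%MM = mjoin 0%MM 1.
Proof.
apply/mnmP => l; case: (unliftP ord_max l) => [k' ->|->]; last first.
  by rewrite mnm1E eqxx mjoin_max.
have -> : lift ord_max k' = widen k' by apply/val_inj; exact: lift_max.
rewrite mjoin_widen mnm1E mnm0E; apply/eqP.
by rewrite eqb0 -val_eqE /= neq_ltn ltn_ord orbT.
Qed.

End MnmJoin.

Section Muni.
Variables (n : nat) (R : nzRingType).

Lemma mcoeff_coef_muni (p : {mpoly R[n.+1]}) i j : ((muni p)`_i)@_j = p@_(mjoin j i).
Proof.
rewrite muniE coef_sum raddf_sum [in RHS](mpolyE p) raddf_sum /=.
apply: eq_bigr => m _; rewrite coefZ coefXn mulr_natr raddfMn /= !mcoeffZ !mcoeffX.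
rewrite -[in RHS](mfrontK m); have [-> | ne] := eqVneq i (m ord_max).
  by rewrite mulr1n (inj_eq (can_inj (@mjoinK n ^~ _))) mfrontK.
rewrite mulr0n; case: eqP => [/mjoin_inj [_ e] | _]; last by rewrite mulr0.
by rewrite e eqxx in ne.
Qed.

Lemma muniX_widen (k : 'I_n) : muni ('X_(widen k) : {mpoly R[n.+1]}) = ('X_k)%:P.
Proof.
apply/polyP => i; apply/mpolyP => j; rewrite mcoeff_coef_muni coefC mcoeffX mnm1_widen.
have [->|ne] := eqVneq i 0%N.
  by rewrite /= mcoeffX (inj_eq (can_inj (@mjoinK n ^~ _))).
by rewrite mcoeff0; case: eqP => // /mjoin_inj [_ e]; rewrite e eqxx in ne.
Qed.

Lemma muniX_max : muni ('X_ord_max : {mpoly R[n.+1]}) = 'X.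
Proof.
apply/polyP => i; apply/mpolyP => j; rewrite mcoeff_coef_muni coefX mcoeffX mnm1_max.
have [->|ne] := eqVneq i 1%N.
  by rewrite /= mcoeff1 (inj_eq (can_inj (@mjoinK n ^~ _))) eq_sym.
rewrite -[false%:R]/(0 : {mpoly R[n]}) mcoeff0.
by case: eqP => // /mjoin_inj [_ e]; rewrite e eqxx in ne.
Qed.

Lemma msize_coef_muni (p : {mpoly R[n.+1]}) k : (msize ((muni p)`_k) <= msize p - k)%N.
Proof.
rewrite msizeE; apply/bigmax_leqP_seq => j j_supp _.
rewrite mcoeff_msupp mcoeff_coef_muni -mcoeff_msupp in j_supp.
have := msize_mdeg_lt j_supp; rewrite mdeg_mjoin; lia.
Qed.

End Muni.

Lemma eq_mpoly_rmorph n (R S : comRingType) (F G : {rmorphism {mpoly R[n]} -> S}) :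
  (forall c, F c%:MP = G c%:MP) -> (forall i, F 'X_i = G 'X_i) -> F =1 G.
Proof.
move=> FGC FGX p; rewrite (mpolyE p) !rmorph_sum; apply: eq_bigr => m _.
rewrite -mul_mpolyC !rmorphM FGC mpolyXE_id !rmorph_prod; congr (_ * _).
by apply: eq_bigr => i _; rewrite !rmorphXn FGX.
Qed.

Definition mshift n (R : comRingType) (x : 'I_n -> R) (f : {mpoly R[n]}) : {mpoly R[n]} :=
  mmap (@mpolyC n R) (fun i => (x i)%:MP + 'X_i) f.

Section MShift.
Variables (n : nat) (R : comRingType).
Implicit Types (x : 'I_n -> R) (f : {mpoly R[n]}).

Lemma meval_hasse (j : 'X_{1..n}) f x : (hasse j f).@[x] = (mshift x f)@_j.
Proof.
rewrite /hasse -mcoeff_map_mpoly; congr (_@_j).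
pose Phi := @mmap n R {mpoly {mpoly R[n]}[n]} (@mpolyC n _ \o @mpolyC n R)
  (fun i => ('X_i : {mpoly R[n]})%:MP + 'X_i).
apply: (@eq_mpoly_rmorph n R _ (map_mpoly (meval x) \o Phi) (mshift x)) => [c|i].
  by rewrite /= /Phi mmapC /mshift mmapC /= map_mpolyC /= mevalC.
rewrite /= /Phi /mshift !mmapX !mmap1U rmorphD /= map_mpolyC /= mevalXU.
by rewrite /map_mpoly mmapX mmap1U.
Qed.

Lemma eq_mshift x y f : x =1 y -> mshift x f = mshift y f.
Proof.
move=> xy; rewrite /mshift /mmap; apply: eq_bigr => m _; congr (_ * _).
by apply: mmap1_eq => i; rewrite xy.
Qed.

Lemma mcoeff_mshiftZ x (a : R) f j : (mshift x (a *: f))@_j = a * (mshift x f)@_j.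
Proof. by rewrite /mshift mmapZ /= mcoeffCM. Qed.

Lemma mcoeff_mshift_sum x (I : Type) (r : seq I) (P : pred I) (F : I -> {mpoly R[n]}) j :
  (mshift x (\sum_(i <- r | P i) F i))@_j = \sum_(i <- r | P i) (mshift x (F i))@_j.
Proof.
elim/big_rec2: _ => [|i y1 y2 _ <-]; first by rewrite /mshift mmap0 mcoeff0.
by rewrite /mshift mmapD mcoeffD.
Qed.

End MShift.

Lemma map_mpoly_mshift n (A B : comRingType) (phi : {rmorphism A -> B}) (x : 'I_n -> A) f :
  map_mpoly phi (mshift x f) = mshift (phi \o x) (map_mpoly phi f).
Proof.
apply: (@eq_mpoly_rmorph n A _ (map_mpoly phi \o mshift x)
          (mshift (phi \o x) \o map_mpoly phi)) => [c|i].
  by rewrite /= /mshift !mmapC map_mpolyC /= mmapC.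
rewrite /= /mshift !mmapX !mmap1U rmorphD /= map_mpolyC.
by rewrite [map_mpoly phi 'X_i]/map_mpoly mmapX mmap1U /= mmapX mmap1U.
Qed.

Lemma muni_mshift n (R : comRingType) (x : 'I_n.+1 -> R) (f : {mpoly R[n.+1]}) :
  muni (mshift x f) =
  map_poly (mshift (fun k => x (widen k))) (muni f) \Po ('X + ((x ord_max)%:MP)%:P).
Proof.
apply: (@eq_mpoly_rmorph n.+1 R _ (@muni n R \o mshift x)
  (comp_poly ('X + ((x ord_max)%:MP)%:P) \o map_poly (mshift (fun k => x (widen k)))
     \o @muni n R)) => [c|i].
  by rewrite /= /mshift !mmapC muniC map_polyC /= mmapC comp_polyC.
rewrite /= /mshift !mmapX !mmap1U rmorphD /= muniC.
case: (unliftP ord_max i) => [k ->|->].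
  have -> : lift ord_max k = widen k by apply/val_inj; exact: lift_max.
  by rewrite muniX_widen map_polyC /= /mshift mmapX mmap1U comp_polyC rmorphD.
by rewrite muniX_max map_polyX comp_polyX addrC.
Qed.

Lemma coef_comp_poly_widen (R : comRingType) (p q : {poly R}) N i : (size p <= N)%N ->
  (p \Po q)`_i = \sum_(k < N) p`_k * (q ^+ k)`_i.
Proof.
move=> size_p; rewrite coef_comp_poly (big_ord_widen N (fun k => p`_k * (q ^+ k)`_i)) //.
rewrite big_mkcond; apply: eq_bigr => k _; case: ltnP => // p_k.
by rewrite nth_default // mul0r.
Qed.

Lemma mcoeff_mshift_mjoin n (R : comRingType) (x : 'I_n.+1 -> R) (f : {mpoly R[n.+1]}) j i :
  (mshift x f)@_(mjoin j i) =
  \sum_(k < size (muni f)) (mshift (fun l => x (widen l)) (muni f)`_k)@_j *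
      (('X + (x ord_max)%:P) ^+ k)`_i.
Proof.
rewrite -mcoeff_coef_muni muni_mshift (coef_comp_poly_widen _ _ (N := size (muni f))).
  rewrite raddf_sum /=; apply: eq_bigr => k _.
  have -> : 'X + ((x ord_max)%:MP)%:P = map_poly (@mpolyC n R) ('X + (x ord_max)%:P).
    by rewrite rmorphD /= map_polyX map_polyC.
  by rewrite -rmorphXn coef_map /= coef_map /= mulrC mcoeffCM mulrC.
exact: size_poly.
Qed.

Definition xjoin n (E : Type) (a : 'I_n -> E) (tau : E) : 'I_n.+1 -> E :=
  fun k => if unlift ord_max k is Some k' then a k' else tau.

Lemma xjoin_widen n (E : Type) (a : 'I_n -> E) tau k : xjoin a tau (widen k) = a k.
Proof.
have -> : widen k = lift ord_max k by apply/val_inj; exact: esym (lift_max k).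
by rewrite /xjoin liftK.
Qed.

Lemma xjoin_max n (E : Type) (a : 'I_n -> E) tau : xjoin a tau ord_max = tau.
Proof. by rewrite /xjoin unlift_none. Qed.

Definition mvanish (R : comRingType) (T : seq R) n m (f : {mpoly R[n]}) : Prop :=
  forall x : 'I_n -> R, (forall i, x i \in T) ->
  forall j : 'X_{1..n}, (mdeg j < m)%N -> (mshift x f)@_j = 0.

Section MultiplicitySchwartzZippel.
Variables (E : fieldType) (T : seq E).
Hypothesis uniq_T : uniq T.

(* For a in T^n, the coefficients in the last variable of f, shifted by a and read at
   j, form a univariate polynomial vanishing to order m - |j| on T. *)
Lemma mvanish_lead_coef_muni n m (f : {mpoly E[n.+1]}) : (0 < size T)%N ->
  mvanish T m f -> mvanish T (m - (size (muni f)).-1 %/ size T) (lead_coef (muni f)).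
Proof.
move=> T_gt0 Vf a aT j lt_j_m; set P := muni f.
have [->|P_neq0] := eqVneq P 0; first by rewrite lead_coef0 /mshift mmap0 mcoeff0.
have size_P : size P = (size P).-1.+1 by rewrite prednK // size_poly_gt0.
pose h := \poly_(k < size P) (mshift a P`_k)@_j.
have -> : (mshift a (lead_coef P))@_j = h`_(size P).-1.
  by rewrite coef_poly {2}size_P ltnSn.
suff -> : h = 0 by rewrite coef0.
apply: (@poly_mroots_eq0 _ T (m - mdeg j)) => // [tau tau_T i lt_i|].
  rewrite (coef_comp_poly_widen _ _ (N := size P)) ?size_poly //.
  have xjoin_T k : xjoin a tau k \in T by case: (unliftP ord_max k) => [k' ->|->];
    rewrite ?xjoin_max // /xjoin liftK.
  have lt_ji_m : (mdeg (mjoin j i) < m)%N by rewrite mdeg_mjoin -ltn_subRL.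
  rewrite -[RHS](Vf _ xjoin_T _ lt_ji_m).
  rewrite mcoeff_mshift_mjoin xjoin_max; apply: eq_bigr => k _.
  by rewrite coef_poly ltn_ord (@eq_mshift _ _ _ a) // => l; rewrite xjoin_widen.
apply: leq_trans (size_poly _ _) _; rewrite size_P.
apply: leq_trans (ltn_ceil _ T_gt0) _; apply: leq_mul => //.
by move: lt_j_m; rewrite ltn_subRL addnC -ltn_subRL.
Qed.

Lemma mvanish_eq0 n m (f : {mpoly E[n]}) :
  mvanish T m f -> (msize f <= m * size T)%N -> f = 0.
Proof.
elim: n m f => [|n IH] m f Vf size_f.
  have /msize1_polyC f_const : (msize f <= 1)%N.
    rewrite msizeE; apply/bigmax_leqP_seq => j _ _.
    by rewrite (_ : j = 0%MM) ?mdeg0 //; apply/mnmP => [[]].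
  case: m Vf size_f => [|m] Vf size_f.
    by apply/eqP; rewrite -msize_poly_eq0 -leqn0.
  have no_coords (x : 'I_0 -> E) i : x i \in T by case: i.
  have := Vf _ (no_coords (fun _ => 0)) 0%MM.
  by rewrite f_const mdeg0 /mshift mmapC mcoeffC eqxx mulr1 => ->.
have [T0|T_gt0] := posnP (size T).
  by apply/eqP; rewrite -msize_poly_eq0 -leqn0 -(muln0 m) -T0.
apply/eqP; apply: contraTT size_f => f_neq0; rewrite -ltnNge.
have lc_neq0 : lead_coef (muni f) != 0.
  rewrite lead_coef_eq0; apply: contra f_neq0 => /eqP P0; apply/eqP/mpolyP => mm.
  by rewrite -(mfrontK mm) -mcoeff_coef_muni P0 coef0 !mcoeff0.
have lc_big : ((m - (size (muni f)).-1 %/ size T) * size T < msize (lead_coef (muni f)))%N.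
  rewrite ltnNge; apply: contra lc_neq0.
  by move/(IH _ _ (mvanish_lead_coef_muni T_gt0 Vf)) ->.
have lc_small : (msize (lead_coef (muni f)) <= msize f - (size (muni f)).-1)%N :=
  msize_coef_muni f _.
have := leq_trunc_div (size (muni f)).-1 (size T).
move: lc_big lc_small; set q := (_ %/ _)%N; set t := (size _).-1.
set lc := msize (lead_coef _); set N := size T; clearbody q t lc N; clear.
nia.
Qed.

End MultiplicitySchwartzZippel.

Section MpolyOfCoef.
Variables (n d : nat) (R : nzRingType).

Definition mpoly_of_coef (c : 'X_{1..n < d.+1} -> R) : {mpoly R[n]} :=
  \sum_w c w *: 'X_[bmnm w].

Lemma mcoeff_mpoly_of_coef c w : (mpoly_of_coef c)@_(bmnm w) = c w.
Proof.
rewrite raddf_sum (bigD1 w) //= mcoeffZ mcoeffX eqxx mulr1 big1 ?addr0 // => w' ne.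
by rewrite mcoeffZ mcoeffX -bmeqP (negbTE ne) mulr0.
Qed.

Lemma msize_mpoly_of_coef c : (msize (mpoly_of_coef c) <= d.+1)%N.
Proof.
apply: leq_trans (msize_sum _ _ _) _; apply/bigmax_leqP_seq => w _ _.
by apply: leq_trans (msizeZ_le _ _) _; rewrite msizeX; exact: bmdeg.
Qed.

End MpolyOfCoef.

Lemma map_mpoly_of_coef n d (R S : nzRingType) (phi : {rmorphism R -> S})
    (c : 'X_{1..n < d.+1} -> R) :
  map_mpoly phi (mpoly_of_coef c) = mpoly_of_coef (phi \o c).
Proof.
by rewrite raddf_sum; apply: eq_bigr => w _; rewrite /= map_mpolyZ map_mpolyX.
Qed.

Lemma col_mx_rank_neq2 (F : fieldType) n (a b : 'rV[F]_n) : \rank (col_mx a b) != 2%N ->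
  exists w c1 c2, a = c1 *: w /\ b = c2 *: w.
Proof.
move=> rank_neq2; have [->|a_neq0] := eqVneq a 0.
  by exists b, 0, 1; rewrite scale0r scale1r.
suff /sub_rVP [c ->] : (b <= a)%MS by exists a, 1, c; rewrite scale1r.
have a_sub : (a <= col_mx a b)%MS by rewrite -addsmxE addsmxSl.
have rank_ab : \rank (col_mx a b) = 1%N.
  have := mxrankS a_sub; rewrite rank_rV a_neq0 => rank_ge1.
  by apply/eqP; rewrite eqn_leq rank_ge1 andbT -ltnS ltn_neqAle rank_neq2 rank_leq_row.
have : (col_mx a b <= a)%MS by rewrite -(mxrank_leqif_sup a_sub).2 rank_ab rank_rV a_neq0.
by rewrite col_mx_sub => /andP [].
Qed.

Section Points.
Variable K : finFieldType.
Local Notation A := {poly {poly K}}.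

Definition cP : {rmorphism K -> A} := @polyC {poly K} \o @polyC K.
Definition t1P : A := ('X : {poly K})%:P.
Definition t2P : A := 'X.
Definition tpt (ab : K * K) : A := cP ab.1 * t1P + cP ab.2 * t2P.
Definition ptP n (u v : 'rV[K]_n) : 'I_n -> A := fun i => tpt (u 0 i, v 0 i).

Lemma pt_tofrac n (u v : 'rV[K]_n) : pt u v =1 @tofrac A \o ptP u v.
Proof. by move=> i; rewrite /pt /ptP /tpt /= rmorphD !rmorphM. Qed.

Definition subst_t (s1 s2 : A) : {rmorphism A -> A} :=
  horner_eval s2 \o map_poly (horner_eval s1 \o map_poly cP).

Lemma subst_t_cP s1 s2 c : subst_t s1 s2 (cP c) = cP c.
Proof. by rewrite /= map_polyC /= map_polyC /= !horner_evalE !hornerC. Qed.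

Lemma subst_t_t1 s1 s2 : subst_t s1 s2 t1P = s1.
Proof. by rewrite /= map_polyC /= map_polyX /= !horner_evalE hornerC hornerX. Qed.

Lemma subst_t_t2 s1 s2 : subst_t s1 s2 t2P = s2.
Proof. by rewrite /= map_polyX !horner_evalE hornerX. Qed.

Lemma subst_t_ptP n (u v : 'rV[K]_n) (c11 c12 c21 c22 : K) :
  subst_t (tpt (c11, c12)) (tpt (c21, c22)) \o ptP u v =1
  ptP (c11 *: u + c21 *: v) (c12 *: u + c22 *: v).
Proof.
move=> i; rewrite /ptP /tpt /comp rmorphD !rmorphM !subst_t_cP subst_t_t1 subst_t_t2.
by rewrite !mxE !rmorphD !rmorphM /=; ring.
Qed.

Lemma lin_indep2_intro n (u v : 'rV[K]_n) :
  (forall al be : K, al *: u + be *: v = 0 -> al = 0 /\ be = 0) -> lin_indep2 u v.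
Proof.
move=> uv_free; suff /eqP : row_free (col_mx u v) by []; apply: inj_row_free => w.
rewrite -[w]hsubmxK mul_row_col [lsubmx w]mx11_scalar [rsubmx w]mx11_scalar.
by rewrite !mul_scalar_mx => /uv_free [-> ->]; rewrite !raddf0 row_mx0.
Qed.

Lemma lin_indep2_delta n (a : 'rV[K]_n) (k l : 'I_n) :
  a 0 k != 0 -> k != l -> lin_indep2 a (delta_mx 0 l).
Proof.
move=> a_k kl; apply: lin_indep2_intro => al be /rowP ab0.
have := ab0 k; rewrite !mxE eqxx /= (negbTE kl) mulr0 addr0 => /eqP.
rewrite mulf_eq0 (negbTE a_k) orbF => /eqP al0; split => //.
by have := ab0 l; rewrite !mxE al0 mul0r add0r !eqxx /= mulr1.
Qed.

Lemma lin_indep2_complete n (w : 'rV[K]_n) : (1 < n)%N ->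
  exists u v (c : K), lin_indep2 u v /\ w = c *: u.
Proof.
move=> n_gt1; pose i0 := Ordinal (ltnW n_gt1); pose i1 := Ordinal n_gt1.
have [->|w_neq0] := eqVneq w 0.
  exists (delta_mx 0 i0), (delta_mx 0 i1), 0; rewrite scale0r; split => //.
  by apply: (@lin_indep2_delta _ _ i0); rewrite ?mxE ?eqxx ?oner_eq0 // -val_eqE.
have [k w_k] : exists k, w 0 k != 0.
  apply/existsP; apply: contraR w_neq0; rewrite negb_exists => /forallP w0.
  by apply/eqP/rowP => k; rewrite mxE; apply/eqP/negPn/w0.
have [l kl] : exists l, k != l.
  by exists (if k == i0 then i1 else i0); case: (eqVneq k i0) => [->|] //; rewrite -val_eqE.
exists w, (delta_mx 0 l), 1; rewrite scale1r; split => //.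
exact: lin_indep2_delta w_k kl.
Qed.

Lemma lin_indep2_span n (a b : 'rV[K]_n) : (1 < n)%N ->
  exists u v (c11 c12 c21 c22 : K),
    [/\ lin_indep2 u v, a = c11 *: u + c21 *: v & b = c12 *: u + c22 *: v].
Proof.
move=> n_gt1; have [ab_indep|] := eqVneq (\rank (col_mx a b)) 2%N.
  by exists a, b, 1, 0, 0, 1; rewrite !scale1r !scale0r addr0 add0r.
move=> /col_mx_rank_neq2 [w [c1 [c2 [-> ->]]]].
have [u [v [c [uv ->]]]] := lin_indep2_complete w n_gt1.
by exists u, v, (c1 * c), (c2 * c), 0, 0; rewrite !scale0r !addr0 !scalerA.
Qed.

Lemma mshift_ptP_eq0_of_full n m (f : {mpoly A[n]}) : (1 < n)%N ->
  (forall s1 s2, map_mpoly (subst_t s1 s2) f = f) ->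
  (forall u v, lin_indep2 u v -> forall j, (mdeg j < m)%N -> (mshift (ptP u v) f)@_j = 0) ->
  forall a b j, (mdeg j < m)%N -> (mshift (ptP a b) f)@_j = 0.
Proof.
move=> n_gt1 f_inv f_full a b j lt_jm.
have [u [v [c11 [c12 [c21 [c22 [uv -> ->]]]]]]] := lin_indep2_span a b n_gt1.
rewrite -(eq_mshift _ (subst_t_ptP u v c11 c12 c21 c22)).
rewrite -[in mshift _ f](f_inv (tpt (c11, c12)) (tpt (c21, c22))).
by rewrite -map_mpoly_mshift mcoeff_map_mpoly f_full //; exact: rmorph0.
Qed.

Lemma tpt_inj : injective tpt.
Proof.
move=> [a1 b1] [a2 b2] /= e.
have := congr1 (fun p : A => (p`_1)`_0) e; have := congr1 (fun p : A => (p`_0)`_1) e.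
rewrite /tpt /t1P /t2P /= -!polyCM !coefD !coefMX !coefC /= ?coefD ?coefC ?coefMX /= ?coefC.
by rewrite !add0r !addr0 => -> ->.
Qed.

Definition grid : seq (FF K) := [seq @tofrac A (tpt ab) | ab <- enum {: K * K}].

Lemma uniq_grid : uniq grid.
Proof.
rewrite map_inj_uniq ?enum_uniq // => ab1 ab2 /eqP.
by rewrite tofrac_eq => /eqP /tpt_inj.
Qed.

Lemma size_grid : size grid = (#|K| ^ 2)%N.
Proof. by rewrite size_map -cardE card_prod expnS expn1. Qed.

Lemma grid_ptP n (x : 'I_n -> FF K) : (forall i, x i \in grid) ->
  exists a b, x =1 @tofrac A \o ptP a b.
Proof.
move=> x_grid; have /fin_all_exists [ab xE] : forall i, exists ab, x i = @tofrac A (tpt ab).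
  by move=> i; have /mapP [ab _ ->] := x_grid i; exists ab.
exists (\row_i (ab i).1), (\row_i (ab i).2) => i.
by rewrite xE /= /ptP !mxE -surjective_pairing.
Qed.

End Points.

Section Columns.
Variables (K : finFieldType) (n m d : nat).
Local Notation A := {poly {poly K}}.

Lemma EVAL_column_sum (c : 'X_{1..n < d.+1} -> K) (u v : 'rV[K]_n) (j : 'X_{1..n < m}) :
  \sum_(w in [set: 'X_{1..n < d.+1}]) inF (c w) * EVAL_entry u v j w =
  @tofrac A ((mshift (ptP u v) (mpoly_of_coef (cP K \o c)))@_j).
Proof.
rewrite -mcoeff_map_mpoly map_mpoly_mshift map_mpoly_of_coef.
rewrite -(eq_mshift _ (pt_tofrac u v)) mcoeff_mshift_sum.
rewrite (eq_bigl predT) => [|w]; last by rewrite inE.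
by apply: eq_bigr => w _; rewrite mcoeff_mshiftZ /EVAL_entry meval_hasse.
Qed.

Lemma Fq_indep_cols_setT : (1 < n)%N -> (d < m * #|K| ^ 2)%N ->
  Fq_indep_cols K m [set: 'X_{1..n < d.+1}].
Proof.
move=> n_gt1 lt_d c c_dep w _; set f := mpoly_of_coef (cP K \o c).
have f_vanish : mvanish (grid K) m (map_mpoly (@tofrac A) f).
  move=> x /grid_ptP [a [b xE]] j lt_jm.
  rewrite (eq_mshift _ xE) -map_mpoly_mshift mcoeff_map_mpoly.
  rewrite (mshift_ptP_eq0_of_full n_gt1 _ _ _ _ lt_jm) ?rmorph0 //
    => [s1 s2|u v uv j' lt_j'm].
    rewrite /f map_mpoly_of_coef /mpoly_of_coef.
    by apply: eq_bigr => w' _; rewrite /comp subst_t_cP.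
  apply/eqP; rewrite -tofrac_eq0 -(EVAL_column_sum c u v (BMultinom lt_j'm)).
  by rewrite c_dep.
have size_f : (msize (map_mpoly (@tofrac A) f) <= m * size (grid K))%N.
  by rewrite map_mpoly_of_coef size_grid; apply: leq_trans (msize_mpoly_of_coef _) lt_d.
have := congr1 (mcoeff (bmnm w)) (mvanish_eq0 (uniq_grid K) f_vanish size_f).
rewrite mcoeff_map_mpoly mcoeff_mpoly_of_coef mcoeff0 => /eqP.
by rewrite tofrac_eq0 => /eqP /polyC_inj /polyC_inj.
Qed.

Lemma rank_Fq_EVAL_full : Fq_indep_cols K m [set: 'X_{1..n < d.+1}] ->
  rank_Fq_EVAL K n m d = #|{: 'X_{1..n < d.+1}}|.
Proof.
move=> indepT; apply/eqP; rewrite eqn_leq; apply/andP; split.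
  by apply/bigmax_leqP => S _; exact: max_card.
rewrite -cardsT; apply: (@leq_bigmax_cond _ (@Fq_indep_colsb K n m d)).
by rewrite /Fq_indep_colsb; case: ClassicalEpsilon.excluded_middle_informative.
Qed.

End Columns.

Lemma card_bmnm n d : #|{: 'X_{1..n < d.+1}}| = 'C(d + n, d).
Proof.
pose f (w : 'X_{1..n < d.+1}) : n.-tuple 'I_d.+1 := [tuple inord (w i) | i < n].
have f_val w i : (tnth (f w) i : nat) = w i.
  rewrite tnth_mktuple inordK // ltnS; have := bmdeg w.
  by rewrite mdegE (bigD1 i) //=; lia.
have f_inj : injective f by move=> w1 w2 e; apply/val_inj/mnmP => i; rewrite -!f_val e.
have f_im : f @: [set: _] = [set t : n.-tuple 'I_d.+1 | \sum_(i <- t) i <= d]%N.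
  apply/setP => t; rewrite inE; apply/imsetP/idP => [[w _ ->]|t_le].
    by rewrite -ltnS big_tuple (eq_bigr _ (fun i _ => f_val w i)) -mdegE bmdeg.
  have t_lt : (mdeg [multinom val (tnth t i) | i < n] < d.+1)%N.
    by move: t_le; rewrite mdegE ltnS (eq_bigr _ (fun i _ => mnmE _ i)) big_tuple.
  exists (BMultinom t_lt) => //; apply: eq_from_tnth => i; apply/val_inj.
  by rewrite /= f_val mnmE.
rewrite -cardsT -(card_imset _ f_inj) f_im card_partial_ord_partitions.
by rewrite addnC -bin_sub ?leq_addl // addnK.
Qed.

Theorem mainTheorem15 (K : finFieldType) (n m d : nat) :
  (2 <= n)%N -> (d < m * #|K| ^ 2)%N ->
  rank_Fq_EVAL K n m d = #|{: 'X_{1..n < d.+1}}| /\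
  #|{: 'X_{1..n < d.+1}}| = 'C(d + n, d).
Proof.
move=> n_ge2 lt_d; split; last exact: card_bmnm.
exact/rank_Fq_EVAL_full/Fq_indep_cols_setT.
Qed.
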